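(* For every positive integer $n$, the number of symmetric gapsets in $\mathcal{G}_{2n}(3n+1)$ is $2^{n-1}$.
   Context: A gapset is a finite set $G\subset\mathbb{N}=\{1,2,\dots\}$ such that whenever $z\in G$ and $z=x+y$ with $x,y\in\mathbb{N}$, then $x\in G$ or $y\in G$; its genus is $g=\#G$. Writing $G=\{\ell_1<\dots<\ell_g\}$, the Frobenius number is $F(G)=\ell_g$; $G$ is symmetric if $F(G)=2g-1$. $G$ is pure $\kappa$-sparse if $\ell_{i+1}-\ell_i\le\kappa$ for all $i$ with equality for some $i$; $\mathcal{G}_\kappa(g)$ is the set of pure $\kappa$-sparse gapsets of genus $g$. *)

From mathcomp Require Import all_boot all_order.
From mathcomp Require Import finmap.
Set Implicit Arguments. Unset Strict Implicit. Unset Printing Implicit Defensive.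
Local Open Scope fset_scope.

Definition is_gapset (G : {fset nat}) : Prop :=
  (forall z, z \in G -> 0 < z) /\
  (forall x y, 0 < x -> 0 < y -> (x + y)%N \in G -> (x \in G) \/ (y \in G)).

Definition genus (G : {fset nat}) : nat := #|` G|.

(* Frobenius number: largest element (0 for the empty set). *)
Definition frob (G : {fset nat}) : nat := \max_(x <- G) x.

Definition symmetric_gapset (G : {fset nat}) : Prop :=
  frob G = 2 * genus G - 1.

Definition elems (G : {fset nat}) : seq nat := sort leq G.

Definition pure_sparse (kappa : nat) (G : {fset nat}) : Prop :=
  let s := elems G in
  (forall i, i.+1 < size s -> nth 0 s i.+1 - nth 0 s i <= kappa) /\
  (exists i, i.+1 < size s /\ nth 0 s i.+1 - nth 0 s i = kappa).

Definition in_Gk (kappa g : nat) (G : {fset nat}) : Prop :=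
  is_gapset G /\ genus G = g /\ pure_sparse kappa G.

From mathcomp Require Import all_boot all_order.
From mathcomp Require Import finmap.
From mathcomp Require Import zify.
Set Implicit Arguments. Unset Strict Implicit. Unset Printing Implicit Defensive.

(* Write F = 6n+1 = 2g-1.  Symmetry means that exactly one of x and F - x is a
   gap (an element of G) for 0 < x < F.  A difference 2n between consecutive
   gaps a < b forces 1, ..., 2n-1 into G, since j splits b as (b - j) + j with
   b - j not a gap.  As differences are at most 2n, the gap preceding F is at
   least 4n+1, and by symmetry exactly 4n+1.  Hence 2n is not a gap, neither is
   4n = 2n + 2n, and 2n+1 is one.  The gaps in [2n+2, 3n] are free and determine
   the rest by symmetry; conversely each of these 2^(n-1) choices yields a
   gapset, because a decomposition x + y of a gap with x, y >= 2n can only be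
   2n + (2n+1) or x + (F - x). *)

Definition consecutive (G : {fset nat}) (a b : nat) :=
  [/\ a \in G, b \in G, a < b & forall c, c \in G -> a < c -> c < b -> False].

Lemma elems_nth_ltn (G : {fset nat}) i j :
  i < size (elems G) -> j < size (elems G) ->
  (nth 0 (elems G) i < nth 0 (elems G) j) = (i < j).
Proof.
have ss : sorted ltn (elems G).
  by rewrite ltn_sorted_uniq_leq sort_uniq fset_uniq sort_sorted //; exact: leq_total.
by move=> hi hj; apply: (Order.PreorderTheory.lt_sorted_ltn_nth 0 ss).
Qed.

Lemma mem_elems (G : {fset nat}) x : (x \in elems G) = (x \in G).
Proof. by rewrite mem_sort. Qed.

Lemma consecutiveP (G : {fset nat}) a b :
  consecutive G a b <->
  exists i, [/\ i.+1 < size (elems G), nth 0 (elems G) i = a & nth 0 (elems G) i.+1 = b].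
Proof.
set s := elems G; split.
- case=> aG bG ab between.
  have as_ : a \in s by rewrite mem_elems.
  have bs : b \in s by rewrite mem_elems.
  have ia : index a s < size s by rewrite index_mem.
  have ib : index b s < size s by rewrite index_mem.
  have iab : index a s < index b s by rewrite -(@elems_nth_ltn G) // !nth_index.
  exists (index a s); split; rewrite ?nth_index //; first exact: leq_ltn_trans iab ib.
  case: (ltngtP (index a s).+1 (index b s)) => [lt_next | | -> ]; [|lia|exact: nth_index].
  have inext : (index a s).+1 < size s by exact: ltn_trans lt_next ib.
  exfalso; apply: (between (nth 0 s (index a s).+1)).
  + by rewrite -mem_elems mem_nth.
  + by rewrite -{1}(nth_index 0 as_) elems_nth_ltn.
  + by rewrite -[X in _ < X](nth_index 0 bs) elems_nth_ltn.
- case=> i [hi <- <-]; split.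
  + by rewrite -mem_elems mem_nth // ltnW.
  + by rewrite -mem_elems mem_nth.
  + by rewrite elems_nth_ltn // ltnW.
  move=> c; rewrite -mem_elems => /(nthP 0) [k hk <-].
  by rewrite (elems_nth_ltn (ltnW hi) hk) (elems_nth_ltn hk hi); lia.
Qed.

Lemma pure_sparseP k (G : {fset nat}) :
  pure_sparse k G <->
  (forall a b, consecutive G a b -> b - a <= k) /\
  (exists a b, consecutive G a b /\ b - a = k).
Proof.
split.
- case=> gaps_le [i [hi gap_eq]]; split.
  + by move=> a b /consecutiveP [j [hj <- <-]]; exact: gaps_le.
  + exists (nth 0 (elems G) i), (nth 0 (elems G) i.+1); split => //.
    by apply/consecutiveP; exists i.
- case=> gaps_le [a [b [/consecutiveP [i [hi ea eb]] gap_eq]]]; split.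
  + by move=> i' hi'; apply: gaps_le; apply/consecutiveP; exists i'.
  + by exists i; rewrite ea eb.
Qed.

Lemma consecutive_below (G : {fset nat}) a b :
  a \in G -> b \in G -> a < b -> exists c, consecutive G c b /\ a <= c.
Proof.
move=> aG bG ab.
pose P x := (x \in G) && (x < b).
have exP : exists x, P x by exists a; rewrite /P aG ab.
have ubP : forall x, P x -> x <= b by move=> x /andP [_ /ltnW].
case: (ex_maxnP exP ubP) => c /andP [cG cb] cmax.
exists c; split; last by apply: cmax; rewrite /P aG ab.
split=> // d dG cd db.
by have := cmax d; rewrite /P dG db => /(_ isT); lia.
Qed.

Lemma frob_ub (G : {fset nat}) x : x \in G -> x <= frob G.
Proof. by move=> xG; apply: (@leq_bigmax_seq _ _ xpredT id). Qed.

Lemma frob_le (G : {fset nat}) m : (forall x, x \in G -> x <= m) -> frob G <= m.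
Proof. by move=> ub; apply/bigmax_leqP_seq => x xG _; apply: ub. Qed.

Lemma frob_mem (G : {fset nat}) : 0 < frob G -> frob G \in G.
Proof.
suff : (frob G == 0) || (frob G \in G) by case: eqP => [->|].
rewrite /frob big_seq; apply: (big_ind (fun m => (m == 0) || (m \in G))) => //.
- by move=> m1 m2 ? ?; rewrite /maxn; case: ifP.
- by move=> x ->; rewrite orbT.
Qed.

Lemma card_fset_count (G : {fset nat}) N :
  (forall x, x \in G -> 0 < x <= N) -> #|` G| = count (mem G) (iota 1 N).
Proof.
move=> hG; rewrite -size_filter -[#|` G|]/(size (enum_fset G)).
apply: perm_size; apply: uniq_perm; rewrite ?filter_uniq ?iota_uniq ?fset_uniq //.
move=> x; rewrite mem_filter mem_iota /=.
by case xG: (x \in enum_fset G) => //=; have := hG x xG; lia.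
Qed.

Lemma count_reflect (p : pred nat) M :
  count (fun x => p (M.+1 - x)) (iota 1 M) = count p (iota 1 M).
Proof.
rewrite -(count_map (fun x => M.+1 - x) p).
suff -> : map (fun x => M.+1 - x) (iota 1 M) = rev (iota 1 M) by rewrite count_rev.
apply: (@eq_from_nth _ 0); first by rewrite size_map size_rev.
rewrite size_map size_iota => i hi.
by rewrite (nth_map 0) ?size_iota // nth_rev ?size_iota // !nth_iota //; lia.
Qed.

Lemma count_self_complementary (p : pred nat) M :
  (forall x, 0 < x <= M -> p (M.+1 - x) = ~~ p x) -> 2 * count p (iota 1 M) = M.
Proof.
move=> pc.
rewrite -[RHS](size_iota 1) -(count_predC p) mul2n -addnn; congr addn.
rewrite -(count_reflect p); apply: eq_in_count => x.
by rewrite mem_iota => hx; rewrite /= pc //; lia.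
Qed.

Lemma complementary_of_count (p : pred nat) M :
  (forall x, 0 < x <= M -> p x || p (M.+1 - x)) -> 2 * count p (iota 1 M) = M ->
  forall x, 0 < x <= M -> p (M.+1 - x) = ~~ p x.
Proof.
move=> cover half.
pose q x := p (M.+1 - x).
have cover_all : count (predU p q) (iota 1 M) = M.
  rewrite -[RHS](size_iota 1) -count_predT; apply: eq_in_count => x.
  by rewrite mem_iota => hx; apply: cover; lia.
have := count_predUI p q (iota 1 M).
rewrite cover_all count_reflect => disjoint.
have : ~~ has (predI p q) (iota 1 M) by rewrite has_count; lia.
move=> /hasPn no_both x hx; have := no_both x; have := cover x hx.
rewrite mem_iota /q /= => + /(_ ltac:(lia)).
by case: (p x); case: (p (M.+1 - x)).
Qed.

Lemma gapset_mem_below_gap (G : {fset nat}) a b j :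
  is_gapset G -> consecutive G a b -> 0 < j < b - a -> j \in G.
Proof.
move=> [_ gap_split] [_ bG _ between] hj.
have b_split : b = (b - j) + j by lia.
rewrite b_split in bG.
case: (gap_split (b - j) j ltac:(lia) ltac:(lia) bG) => // bjG.
by exfalso; apply: (between (b - j)) => //; lia.
Qed.

Lemma symmetric_gapset_compl (G : {fset nat}) x :
  is_gapset G -> symmetric_gapset G -> 0 < x < frob G ->
  (frob G - x \in G) = (x \notin G).
Proof.
move=> [G_pos gap_split] hsym hx.
set F := frob G in hx hsym *.
have FG : F \in G by apply: frob_mem; lia.
have G_range : forall y, y \in G -> 0 < y <= F.
  by move=> y yG; rewrite G_pos ?frob_ub.
have iotaF : iota 1 F = iota 1 F.-1 ++ [:: F].
  rewrite [in LHS](_ : F = F.-1 + 1); last by have := G_pos _ FG; lia.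
  by rewrite iotaD add1n prednK ?G_pos.
have half : 2 * count (mem G) (iota 1 F.-1) = F.-1.
  have := card_fset_count G_range; rewrite iotaF count_cat /= FG /=.
  move: hsym; rewrite /symmetric_gapset /genus -/F.
  move: (count _ _) #|` G| => c g; lia.
have cover : forall y, 0 < y <= F.-1 -> (y \in G) || (F.-1.+1 - y \in G).
  move=> y hy; apply/orP; apply: gap_split; try lia.
  by rewrite (_ : y + _ = F) //; lia.
have := complementary_of_count cover half (x := x) ltac:(lia).
by rewrite prednK //; lia.
Qed.

Lemma consecutive_gap_le (G : {fset nat}) k a b :
  (forall a, a \in G -> a < frob G -> exists2 c, c \in G & a < c <= a + k) ->
  consecutive G a b -> b - a <= k.
Proof.
move=> succ [aG bG ab between].
have [c cG /andP [ac ck]] := succ a aG (leq_trans ab (frob_ub bG)).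
case: (leqP b c) => bc; first lia.
by exfalso; apply: (between c).
Qed.

(** * Gapsets from binary words *)

Section Pattern.

Variables (n : nat) (B : seq bool).
Hypothesis n_gt0 : 0 < n.

Definition low_pattern (x : nat) : bool :=
  (x < 2 * n) || (x == 2 * n + 1) || (2 * n + 2 <= x) && nth false B (x - (2 * n + 2)).

Definition pattern (x : nat) : bool :=
  if x <= 3 * n then low_pattern x
  else if x <= 6 * n then ~~ low_pattern (6 * n + 1 - x)
  else x == 6 * n + 1.

Definition pattern_gapset : {fset nat} :=
  [fset x in filter pattern (iota 1 (6 * n + 1))]%fset.

Lemma mem_pattern_gapset x :
  (x \in pattern_gapset) = (0 < x <= 6 * n + 1) && pattern x.
Proof.
rewrite in_fset mem_filter mem_iota andbC.
by congr (_ && _); apply/idP/idP; lia.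
Qed.

Lemma pattern_compl x : 0 < x <= 6 * n -> pattern (6 * n + 1 - x) = ~~ pattern x.
Proof.
move=> hx; rewrite /pattern; case: (leqP x (3 * n)) => hx3.
- rewrite ifF; last lia.
  rewrite ifT; last lia.
  by rewrite (_ : 6 * n + 1 - (6 * n + 1 - x) = x) //; lia.
- rewrite ifT; last lia.
  by rewrite ifT ?negbK //; lia.
Qed.

Lemma pattern_word i : i < n - 1 -> pattern (2 * n + 2 + i) = nth false B i.
Proof.
move=> hi; rewrite /pattern /low_pattern ifT; last lia.
rewrite (_ : 2 * n + 2 + i - (2 * n + 2) = i); last lia.
by case: (nth false B i); lia.
Qed.

Lemma pattern_lt_2n x : x < 2 * n -> pattern x.
Proof. by move=> hx; rewrite /pattern /low_pattern; repeat case: ifP; lia. Qed.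

Lemma pattern_2n1 : pattern (2 * n + 1).
Proof. by rewrite /pattern /low_pattern; repeat case: ifP; lia. Qed.

Lemma pattern_4n1 : pattern (4 * n + 1).
Proof. by rewrite /pattern /low_pattern; repeat case: ifP; lia. Qed.

Lemma pattern_6n1 : pattern (6 * n + 1).
Proof. by rewrite /pattern; repeat case: ifP; lia. Qed.

Lemma pattern_ge_4n x : 4 * n <= x <= 6 * n -> pattern x -> x = 4 * n + 1.
Proof. by move=> hx; rewrite /pattern /low_pattern; repeat case: ifP; lia. Qed.

Lemma pattern_gapset_is_gapset : is_gapset pattern_gapset.
Proof.
split=> [z | x y x_gt0 y_gt0]; rewrite !mem_pattern_gapset; first lia.
move=> /andP [hxy pxy].
case: (ltnP x (2 * n)) => hx; first by left; rewrite pattern_lt_2n ?andbT; lia.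
case: (ltnP y (2 * n)) => hy; first by right; rewrite pattern_lt_2n ?andbT; lia.
case: (leqP (x + y) (6 * n)) => hF.
  have e := pattern_ge_4n (x := x + y) ltac:(lia) pxy.
  have [->|->] : x = 2 * n + 1 \/ y = 2 * n + 1 by lia.
  - by left; rewrite pattern_2n1 andbT; lia.
  - by right; rewrite pattern_2n1 andbT; lia.
have -> : y = 6 * n + 1 - x by lia.
have := pattern_compl (x := x) ltac:(lia).
by case: (pattern x) => ->; [left | right]; rewrite andbT; lia.
Qed.

Lemma genus_pattern_gapset : genus pattern_gapset = 3 * n + 1.
Proof.
rewrite /genus card_fseq undup_id ?filter_uniq ?iota_uniq // size_filter.
rewrite iotaD count_cat /= (addnC 1 (6 * n)) pattern_6n1 addn0.
suff : 2 * count pattern (iota 1 (6 * n)) = 6 * n by lia.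
by apply: count_self_complementary => x hx; rewrite -pattern_compl // addn1.
Qed.

Lemma frob_pattern_gapset : frob pattern_gapset = 6 * n + 1.
Proof.
apply/eqP; rewrite eqn_leq frob_ub ?andbT; last first.
  by rewrite mem_pattern_gapset pattern_6n1 andbT; lia.
by apply: frob_le => x; rewrite mem_pattern_gapset; lia.
Qed.

Lemma pure_sparse_pattern_gapset : pure_sparse (2 * n) pattern_gapset.
Proof.
apply/pure_sparseP; split.
- move=> ? ?; apply: consecutive_gap_le => a.
  rewrite frob_pattern_gapset mem_pattern_gapset => /andP [ha pa] aF.
  suff [c [pc hc cF]] : exists c, [/\ pattern c, a < c <= a + 2 * n & c <= 6 * n + 1].
    by exists c => //; rewrite mem_pattern_gapset pc andbT; lia.
  case: (ltnP a.+1 (2 * n)) => [h | ge1].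
    by exists a.+1; split; [exact: pattern_lt_2n | lia..].
  case: (ltnP a (2 * n + 1)) => [h | ge2].
    by exists (2 * n + 1); split; [exact: pattern_2n1 | lia..].
  case: (leqP a (4 * n)) => [h | ge3].
    by exists (4 * n + 1); split; [exact: pattern_4n1 | lia..].
  by exists (6 * n + 1); split; [exact: pattern_6n1 | lia..].
- exists (4 * n + 1), (6 * n + 1); split; last lia.
  split; rewrite ?mem_pattern_gapset ?pattern_4n1 ?pattern_6n1 ?andbT; try lia.
  move=> c; rewrite mem_pattern_gapset => /andP [_ pc] lo hi.
  by have := pattern_ge_4n (x := c) ltac:(lia) pc; lia.
Qed.

Lemma pattern_gapset_correct :
  in_Gk (2 * n) (3 * n + 1) pattern_gapset /\ symmetric_gapset pattern_gapset.
Proof.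
split; last by rewrite /symmetric_gapset frob_pattern_gapset genus_pattern_gapset; lia.
split; first exact: pattern_gapset_is_gapset.
by split; [exact: genus_pattern_gapset | exact: pure_sparse_pattern_gapset].
Qed.

End Pattern.

Lemma pattern_gapset_inj n (B1 B2 : (n - 1).-tuple bool) :
  pattern_gapset n B1 = pattern_gapset n B2 -> B1 = B2.
Proof.
move=> eqG; apply: val_inj; apply: (@eq_from_nth _ false); first by rewrite !size_tuple.
move=> i; rewrite size_tuple => hi.
have n_gt0 : 0 < n by lia.
rewrite -(@pattern_word n B1 n_gt0 _ hi) -(@pattern_word n B2 n_gt0 _ hi).
have := congr1 (fun G => 2 * n + 2 + i \in G) eqG; rewrite /= !mem_pattern_gapset.
by rewrite (_ : 0 < 2 * n + 2 + i <= 6 * n + 1) //; lia.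
Qed.

(** * Classification of the symmetric members *)

Section Classification.

Variables (n : nat) (G : {fset nat}).
Hypotheses (n_gt0 : 0 < n) (G_in : in_Gk (2 * n) (3 * n + 1) G)
  (G_sym : symmetric_gapset G).

Let G_gapset : is_gapset G := G_in.1.

Lemma frob_sym_gapset : frob G = 6 * n + 1.
Proof. by case: G_in => _ [g _]; rewrite G_sym g; lia. Qed.

Lemma sym_gapset_compl x : 0 < x < 6 * n + 1 -> (6 * n + 1 - x \in G) = (x \notin G).
Proof. by rewrite -frob_sym_gapset; exact: symmetric_gapset_compl. Qed.

Lemma sym_gapset_lt_2n j : 0 < j < 2 * n -> j \in G.
Proof.
case: G_in => _ [_ /pure_sparseP [_ [a [b [ab gap]]]]] hj.
by apply: (gapset_mem_below_gap G_gapset ab); lia.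
Qed.

Lemma sym_gapset_4n1 : 4 * n + 1 \in G.
Proof.
have FG : 6 * n + 1 \in G by rewrite -frob_sym_gapset frob_mem // frob_sym_gapset addn1.
have G1 : 1 \in G by apply: sym_gapset_lt_2n; lia.
have [c [cF c_ge1]] := consecutive_below G1 FG ltac:(lia).
case: G_in => _ [_ /pure_sparseP [gaps_le _]].
have := gaps_le _ _ cF; case: cF => cG _ c_lt _ gap.
case: (ltngtP c (4 * n + 1)) => [|c_gt|<- //]; first lia.
by have := sym_gapset_compl (x := c) ltac:(lia); rewrite cG sym_gapset_lt_2n //; lia.
Qed.

Lemma sym_gapset_2n : (2 * n \in G) = false.
Proof.
have := sym_gapset_compl (x := 2 * n) ltac:(lia).
by rewrite (_ : _ - _ = 4 * n + 1) ?sym_gapset_4n1; [case: (_ \in G) | lia].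
Qed.

Lemma sym_gapset_2n1 : 2 * n + 1 \in G.
Proof.
have n4 : (4 * n \in G) = false.
  apply/negbTE/negP; rewrite (_ : 4 * n = 2 * n + 2 * n); last lia.
  by case/(G_gapset.2 (2 * n) (2 * n) ltac:(lia) ltac:(lia)); rewrite sym_gapset_2n.
have := sym_gapset_compl (x := 4 * n) ltac:(lia).
by rewrite n4 (_ : _ - _ = 2 * n + 1) //; lia.
Qed.

Definition word_of_gapset : (n - 1).-tuple bool := [tuple 2 * n + 2 + i \in G | i < n - 1].

Lemma low_pattern_word_of_gapset x :
  0 < x <= 3 * n -> (x \in G) = low_pattern n word_of_gapset x.
Proof.
move=> hx; rewrite /low_pattern.
case: (ltnP x (2 * n)) => [h | ge2n]; first by rewrite sym_gapset_lt_2n //; lia.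
case: (ltngtP x (2 * n + 1)) => [lt | gt | ->]; last by rewrite sym_gapset_2n1 orbT.
  by rewrite (_ : x = 2 * n) ?sym_gapset_2n; lia.
have hk : x - (2 * n + 2) < n - 1 by lia.
rewrite (@nth_mktuple _ _ _ false (Ordinal hk)) /= (_ : 2 * n + 2 + _ = x); last lia.
by case: (x \in G); lia.
Qed.

Lemma sym_gapset_eq_pattern_gapset : G = pattern_gapset n word_of_gapset.
Proof.
case: G_gapset => G_pos _.
apply/fsetP => x; rewrite mem_pattern_gapset /pattern.
case: (posnP x) => [-> | x_gt0]; first by apply/negbTE/negP => /G_pos.
case: (leqP x (3 * n)) => [h3 | gt3]; first by rewrite low_pattern_word_of_gapset //; lia.
case: (leqP x (6 * n)) => [h6 | gt6].
  rewrite -low_pattern_word_of_gapset; last lia.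
  rewrite sym_gapset_compl ?negbK; last lia.
  by rewrite (_ : x <= 6 * n + 1) ?andbT //; lia.
case: (ltngtP x (6 * n + 1)) => [|gtF|->]; [lia| |].
  by apply/negbTE/negP => /frob_ub; rewrite frob_sym_gapset; lia.
by rewrite -frob_sym_gapset frob_mem ?frob_sym_gapset //; lia.
Qed.

End Classification.

Theorem mainTheorem4 (n : nat) (hn : 0 < n) :
  exists s : seq {fset nat},
    uniq s /\
    (forall G : {fset nat},
        G \in s <-> (in_Gk (2 * n) (3 * n + 1) G /\ symmetric_gapset G)) /\
    size s = 2 ^ (n - 1).
Proof.
exists [seq pattern_gapset n B | B : (n - 1).-tuple bool]; split; [|split].
- by rewrite map_inj_uniq ?enum_uniq //; exact: pattern_gapset_inj.
- move=> G; split.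
  + by case/mapP => B _ ->; exact: pattern_gapset_correct.
  + case=> G_in G_sym; apply/mapP; exists (word_of_gapset n G); first by rewrite mem_enum.
    exact: sym_gapset_eq_pattern_gapset.
- by rewrite size_map -cardE card_tuple card_bool.
Qed.
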